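(* Let $m=2\ell$ be an even positive integer, and let $C^{(m)}=(c_{ij})$ be the $m\times m$ coloring matrix with $c_{ij}=1$ if $i+j\le m+1$, except that $c_{ij}=0$ when $i+j=m$ and both $i,j$ are odd; and $c_{ij}=0$ if $i+j>m+1$. Then for every $n\ge1$, $$t_{C^{(m)}}(n)=\frac{\ell}{n}\cdot2^{2n-1}\binom{\frac{\ell+1}{2}n-\frac{\ell}{2}-1}{n-1}.$$
   Context: A plane tree is an unlabeled rooted tree in which the children of every vertex are linearly ordered. A coloring matrix is an $m\times m$ matrix $A=(a_{ij})$ with entries in $\{0,1\}$. An $A$-coloring of a plane tree assigns to each vertex a color in $\{1,\dots,m\}$ such that whenever a vertex of color $j$ is a child of a vertex of color $i$, $a_{ij}=1$. Let $t_A(n)$ be the number of pairs (plane tree with $n$ vertices, $A$-coloring of it). For real $y$ and integer $k\ge0$, $\binom{y}{k}=y(y-1)\cdots(y-k+1)/k!$. *)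

From HB Require Import structures.
From mathcomp Require Import all_boot all_order all_algebra.
Set Implicit Arguments. Unset Strict Implicit. Unset Printing Implicit Defensive.
Import Order.TTheory GRing.Theory Num.Theory.

(* Colored plane trees: a vertex carries a color (a natural number, the
   meaningful colors being 1..m) and an ordered list of children.
   A colored plane tree is exactly a pair (plane tree, coloring of it). *)
Inductive ctree : Type := CNode of nat & seq ctree.

Fixpoint ctree_enc (t : ctree) : GenTree.tree nat :=
  match t with CNode c cs => GenTree.Node c (map ctree_enc cs) end.

Fixpoint ctree_dec (t : GenTree.tree nat) : ctree :=
  match t with
  | GenTree.Leaf _ => CNode 0 [::]
  | GenTree.Node c ts => CNode c (map ctree_dec ts)
  end.

Fixpoint ctree_encK (t : ctree) : ctree_dec (ctree_enc t) = t :=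
  match t with
  | CNode c cs => f_equal (CNode c)
      ((fix F (l : seq ctree) : map ctree_dec (map ctree_enc l) = l :=
          match l with
          | [::] => erefl
          | x :: l' => f_equal2 cons (ctree_encK x) (F l')
          end) cs)
  end.

Definition ctree_encK' : cancel ctree_enc ctree_dec := ctree_encK.
HB.instance Definition _ := Countable.copy ctree (can_type ctree_encK').

Fixpoint csize (t : ctree) : nat :=
  match t with CNode _ cs => (sumn (map csize cs)).+1 end.

Definition ccolor (t : ctree) : nat := let: CNode c _ := t in c.

Fixpoint cvalid (m : nat) (A : nat -> nat -> bool) (t : ctree) : bool :=
  match t with
  | CNode i cs =>
      (0 < i <= m)%N && all (fun u => A i (ccolor u) && cvalid m A u) cs
  end.

(* N = t_A(n): N is the number of pairs (plane tree with n vertices,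
   A-coloring of it), i.e. of A-colored plane trees with n vertices. *)
Definition is_tA (m : nat) (A : nat -> nat -> bool) (n N : nat) : Prop :=
  exists s : seq ctree,
    [/\ uniq s,
        forall t, (t \in s) = cvalid m A t && (csize t == n)
      & size s = N].

(* The coloring matrix C^(m) (1-based indices). *)
Definition Cmat (m : nat) (i j : nat) : bool :=
  ((i + j <= m.+1)%N) && ~~ [&& i + j == m, odd i & odd j].

Definition binomr (y : rat) (k : nat) : rat :=
  (\prod_(i < k) (y - i%:R)) / (k`!)%:R.

From HB Require Import structures.
From mathcomp Require Import all_boot all_order all_algebra.
From mathcomp Require Import ring zify.
Import Order.TTheory GRing.Theory Num.Theory.
Set Implicit Arguments. Unset Strict Implicit. Unset Printing Implicit Defensive.

(* Let T_i(z) count the trees with root color i by vertices. Splitting off the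
   first subtree of the root gives T_i = z + S_i T_i, where S_i sums T_j over
   the colors j allowed below i; these relations determine all coefficients.
   Let B = 1 + z B^t with t = (l+1)/2 and F(z) = B(4z)^(-1/2), so that
   F^(l-1) - F^(l+1) = 4z.  With k = ceil(i/2), the series
   T_i = (F^(k-1) - F^k)/2 solve the system: the rows of C^(2l) telescope to
   1 - S_i = (F^(l-k) + F^(l+1-k))/2.  Summing over the 2l colors telescopes
   to 1 - F^l.  The coefficients of the powers of B are Gould's A_n(a, t),
   and the identity F^a F^b = F^(a+b) used throughout is the Rothe-Hagen
   convolution formula for them. *)

Section ColoredForests.

Variables (m : nat) (A : nat -> nat -> bool).

Definition fvalid (i : nat) (f : seq ctree) : bool :=
  all (fun u => A i (ccolor u) && cvalid m A u) f.

Definition fsize (f : seq ctree) : nat := sumn (map csize f).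

Definition child_colors (i : nat) : seq nat := [seq j <- iota 1 m | A i j].

(* The forests are split by the size [p] of all but the first tree and the
   color [j] of the first root; [N] is fuel, sufficient when [n <= N]. *)
Fixpoint cforests (N i n : nat) : seq (seq ctree) :=
  if n is 0 then [:: [::]] else
  if N is N'.+1 then
    [seq CNode x.2 y.1 :: y.2
       | x <- [seq (p, j) | p <- iota 0 n, j <- child_colors i],
         y <- [seq (f1, f2) | f1 <- cforests N' x.2 (n - x.1).-1,
                              f2 <- cforests N' i x.1]]
  else [::].

Lemma fsize_eq0 f : (fsize f == 0) = (f == [::]).
Proof. by case: f => [|[c cs] f] //=; rewrite /fsize /= addSn. Qed.

Lemma cforests_sound N i n f :
  f \in cforests N i n -> fvalid i f && (fsize f == n).
Proof.
elim: N i n f => [|N IH] i [|n] f; cbn [cforests]; rewrite ?inE //;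
  try by move=> /eqP->.
case/allpairsPdep => -[p j] [[f1 f2] [/allpairsP[[p' j'] [+ + [-> ->]]]]].
rewrite mem_iota /child_colors mem_filter mem_iota => /= hp /andP[Aij hj].
move=> /allpairsP[[g1 g2] [h1 h2 [-> ->]]] ->; rewrite /= in h1 h2 *.
case/andP: (IH _ _ _ h1) => v1 /eqP s1; case/andP: (IH _ _ _ h2) => v2 /eqP s2.
rewrite /fvalid /= Aij -/(fvalid j' g1) -/(fvalid i g2) v1 v2.
rewrite /fsize /= -/(fsize g1) -/(fsize g2) s1 s2; apply/andP; split; lia.
Qed.

Lemma cforests_complete N i n f :
  n <= N -> fvalid i f -> fsize f = n -> f \in cforests N i n.
Proof.
elim: N i n f => [|N IH] i [|n] f // le_nN vf; cbn [cforests];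
  try by move/eqP; rewrite fsize_eq0 inE.
case: f vf => [|[j f1] f2] // vf sf; rewrite /fvalid /fsize /= in vf sf.
case/andP: vf => /andP[Aij /andP[hj v1]] v2.
rewrite -/(fsize f1) -/(fsize f2) in sf.
apply/allpairsPdep; exists (fsize f2, j), (f1, f2); split => //.
  apply/allpairsP; exists (fsize f2, j); split => //.
    by rewrite mem_iota /=; lia.
  by rewrite /child_colors mem_filter Aij mem_iota /=; lia.
by apply/allpairsP; exists (f1, f2); split => //=; apply: IH => //; lia.
Qed.

Lemma cforests_uniq N i n : uniq (cforests N i n).
Proof.
elim: N i n => [|N IH] i [|n] //; cbn [cforests]; apply: allpairs_uniq_dep.
- apply: allpairs_uniq => [||[p j] [p' j'] _ _ [-> ->]] //.
  - exact: iota_uniq.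
  - by rewrite filter_uniq ?iota_uniq.
- by move=> x _; apply: allpairs_uniq => // [[f1 f2] [g1 g2] _ _ [-> ->]].
have fsize_snd k r q f1 f2 :
    (f1, f2) \in [seq (g1, g2) | g1 <- cforests N k r, g2 <- cforests N i q] ->
  fsize f2 = q.
  case/allpairsP=> -[g1 g2] [_ h2 [_ ->]].
  by case/andP: (cforests_sound h2) => _ /eqP.
move=> u v /allpairsPdep[[p j] [[f1 f2] [_ /fsize_snd sf ->]]].
move=> /allpairsPdep[[p' j'] [[f1' f2'] [_ /fsize_snd sf' ->]]] /= [-> -> eq_f2].
by move: sf sf' => /= <- <-; rewrite eq_f2.
Qed.

Lemma size_cforests0 N i : size (cforests N i 0) = 1.
Proof. by case: N. Qed.

Lemma size_cforestsS N i n :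
  size (cforests N.+1 i n.+1) =
  \sum_(p < n.+1) \sum_(j <- child_colors i)
     size (cforests N j (n - p)) * size (cforests N i p).
Proof.
cbn [cforests]; rewrite size_allpairs_dep sumnE big_map big_allpairs.
rewrite -[iota 0 n.+1]/(index_iota 0 n.+1) big_mkord.
apply: eq_bigr => p _; apply: eq_bigr => j _.
by rewrite size_allpairs subSKn.
Qed.

Definition ctrees (n : nat) : seq ctree :=
  [seq CNode i f | i <- iota 1 m, f <- cforests n.-1 i n.-1].

Lemma size_ctrees n :
  size (ctrees n) = \sum_(i <- iota 1 m) size (cforests n.-1 i n.-1).
Proof. by rewrite size_allpairs_dep sumnE big_map. Qed.

Lemma ctrees_tA n : 0 < n -> is_tA m A n (size (ctrees n)).
Proof.
move=> n_gt0; exists (ctrees n); split => //.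
  apply: allpairs_uniq_dep => [||[i f] [i' f'] _ _ /= [-> ->]] //.
    exact: iota_uniq.
  by move=> i _; apply: cforests_uniq.
move=> [c cs]; rewrite /= -/(fvalid c cs) -/(fsize cs).
apply/allpairsPdep/idP => [[i [f [hi hf [-> ->]]]] | /andP[/andP[hc vcs] /eqP scs]].
  case/andP: (cforests_sound hf) => -> /eqP ->.
  by move: hi; rewrite mem_iota andbT; lia.
exists c, cs; split => //; first by rewrite mem_iota; lia.
by apply: cforests_complete => //; lia.
Qed.

End ColoredForests.

Local Open Scope ring_scope.

(* Gould's A_n(a, t) = a / (a + t n) * binom(a + t n, n): the coefficient of
   z^n in B(z)^a, where B = 1 + z B^t. *)
Definition rotheA (t : rat) (n : nat) (a : rat) : rat :=
  if n is n'.+1 then a / n%:R * binomr (a + t * n%:R - 1) n' else 1.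

Lemma rotheA0 t n : rotheA t n 0 = (n == 0%N)%:R.
Proof. by case: n => [|n] //=; rewrite !mul0r. Qed.

Lemma rotheA_succ_diff t n a :
  rotheA t n.+1 (a + 1) - rotheA t n.+1 a = rotheA t n (a + t).
Proof.
case: n => [|n]; first by rewrite /= /binomr !big_ord0 fact0 !divr1; ring.
rewrite /rotheA /binomr big_ord_recl [in X in _ - X]big_ord_recr /=.
set Q := \prod_(i < n) (a + t * n.+2%:R - 1 - i%:R).
have -> : \prod_(i < n) (a + 1 + t * n.+2%:R - 1 - (bump 0 i)%:R) = Q.
  by apply: eq_bigr => i _; rewrite /bump leq0n add1n -natr1; ring.
have -> : \prod_(i < n) (a + t + t * n.+1%:R - 1 - i%:R) = Q.
  by apply: eq_bigr => i _; rewrite -[n.+2%:R]natr1 -[n.+1%:R]natr1; ring.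
have nfact_neq0 : (n`!)%:R != 0 :> rat by rewrite pnatr_eq0 -lt0n fact_gt0.
rewrite !factS !natrM -[n.+2%:R]natr1 -[n.+1%:R]natr1.
by field; rewrite nfact_neq0 !natr1 !pnatr_eq0.
Qed.

Definition rotheA_poly (t : rat) (n : nat) : {poly rat} :=
  if n is n'.+1 then
    'X * ((n'.+1%:R * n'`!%:R)^-1)%:P *
    \prod_(k < n') ('X + (t * n'.+1%:R - 1 - k%:R)%:P)
  else 1.

Lemma horner_rotheA_poly t n a : (rotheA_poly t n).[a] = rotheA t n a.
Proof.
case: n => [|n]; first by rewrite hornerC.
rewrite /= hornerM horner_prod hornerM hornerX hornerC /binomr.
under eq_bigr do rewrite hornerD hornerX hornerC.
rewrite [in RHS](eq_bigr (fun i : 'I_n => a + (t * n.+1%:R - 1 - i%:R))) => [|i _].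
  by rewrite invfM; ring.
by ring.
Qed.

Lemma poly_natr_eq0 (R : numDomainType) (p : {poly R}) :
  (forall i : nat, p.[i%:R] = 0) -> p = 0.
Proof.
move=> p_nat0; apply: (@roots_geq_poly_eq0 _ _ [seq i%:R | i <- iota 0 (size p)]).
- by apply/allP => _ /mapP[i _ ->]; rewrite /root p_nat0.
- by rewrite map_inj_uniq ?iota_uniq // => i j /eqP; rewrite eqr_nat => /eqP.
- by rewrite size_map size_iota.
Qed.

Lemma rotheA_conv t n a b :
  \sum_(k < n.+1) rotheA t k a * rotheA t (n - k) b = rotheA t n (a + b).
Proof.
elim: n a b => [|n IH] a b; first by rewrite big_ord1 mulr1.
(* The defect [D] is polynomial in its argument, vanishes at 0 and is
   1-periodic by induction, so it vanishes identically. *)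
pose D x := \sum_(k < n.+2) rotheA t k x * rotheA t (n.+1 - k) b
            - rotheA t n.+1 (x + b).
have D_succ x : D (x + 1) = D x.
  apply/eqP; rewrite -subr_eq0 /D; apply/eqP.
  set S1 := \sum_(k < _) _; set S0 := \sum_(k < _) _.
  have -> : S1 - rotheA t n.+1 (x + 1 + b) - (S0 - rotheA t n.+1 (x + b)) =
            (S1 - S0) - (rotheA t n.+1 (x + b + 1) - rotheA t n.+1 (x + b)).
    by rewrite (addrAC x); ring.
  rewrite rotheA_succ_diff /S1 /S0 -sumrB big_ord_recl /= subrr add0r.
  under eq_bigr do rewrite /bump leq0n add1n subSS -mulrBl rotheA_succ_diff.
  by rewrite IH addrAC subrr.
have D_nat i : D i%:R = 0.
  elim: i => [|i IHi]; last by rewrite -natr1 D_succ.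
  rewrite /D big_ord_recl big1 => [|k _]; last by rewrite rotheA0 mul0r.
  by rewrite subn0 add0r addr0 mul1r subrr.
suff /eqP : D a = 0 by rewrite subr_eq0 => /eqP.
pose p := \sum_(k < n.+2) rotheA_poly t k * (rotheA t (n.+1 - k) b)%:P
          - (rotheA_poly t n.+1 \Po ('X + b%:P)).
have Dp x : D x = p.[x].
  rewrite /D /p hornerD hornerN horner_comp hornerD hornerX hornerC.
  rewrite horner_rotheA_poly horner_sum; congr (_ - _); apply: eq_bigr => k _.
  by rewrite hornerM hornerC horner_rotheA_poly.
rewrite Dp (@poly_natr_eq0 _ p) ?horner0 // => i.
by rewrite -Dp D_nat.
Qed.

Section ColorMatrixSeries.

Variable l : nat.

(* The coefficient of z^n in F(z)^a, where F(z) = B(4z)^(-1/2) and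
   B = 1 + z B^((l+1)/2). *)
Definition fpow (a : rat) (n : nat) : rat :=
  4 ^+ n * rotheA ((l%:R + 1) / 2) n (- a / 2).

Lemma fpow_conv a b n :
  \sum_(k < n.+1) fpow a k * fpow b (n - k) = fpow (a + b) n.
Proof.
rewrite /fpow (_ : - (a + b) / 2 = - a / 2 + - b / 2); last by field.
rewrite -rotheA_conv mulr_sumr; apply: eq_bigr => k _.
have -> : 4 ^+ n = 4 ^+ k * 4 ^+ (n - k) :> rat by rewrite -exprD subnKC // -ltnS.
ring.
Qed.

Lemma fpow_coef0 a : fpow a 0 = 1.
Proof. by rewrite /fpow mul1r. Qed.

Lemma fpow_exp0 n : fpow 0 n = (n == 0%N)%:R.
Proof.
by rewrite /fpow oppr0 mul0r rotheA0; case: n => [|n] /=; rewrite ?mulr0 ?mulr1.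
Qed.

Lemma fpow_pred_sub_succ n :
  fpow (l%:R - 1) n - fpow (l%:R + 1) n = 4 * (n == 1%N)%:R.
Proof.
case: n => [|n]; first by rewrite !fpow_coef0 subrr mulr0.
rewrite /fpow -mulrBr (_ : - (l%:R - 1) / 2 = - (l%:R + 1) / 2 + 1); last by field.
rewrite rotheA_succ_diff (_ : - (l%:R + 1) / 2 + (l%:R + 1) / 2 = 0) ?rotheA0;
  last by field.
by case: n => [|n] /=; rewrite ?expr1 ?mulr1 ?mulr0.
Qed.

Definition tree_coef (i n : nat) : rat :=
  (fpow ((uphalf i)%:R - 1) n - fpow (uphalf i)%:R n) / 2.

Definition child_coef (i n : nat) : rat :=
  \sum_(j <- child_colors (2 * l) (Cmat (2 * l)) i) tree_coef j n.

(* 1 - S_i, see [child_coef_E]. *)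
Definition denom_coef (i n : nat) : rat :=
  (fpow (l%:R - (uphalf i)%:R) n + fpow (l%:R + 1 - (uphalf i)%:R) n) / 2.

Lemma tree_coef_pair p (b : bool) n :
  tree_coef (2 * p + 1 + b) n = (fpow p%:R n - fpow p.+1%:R n) / 2.
Proof.
by rewrite /tree_coef (_ : uphalf _ = p.+1) -?natr1 ?addrK //; case: b; lia.
Qed.

Lemma sum_tree_coef p n :
  \sum_(j <- iota 1 (2 * p)) tree_coef j n = fpow 0 n - fpow p%:R n.
Proof.
elim: p => [|p IH]; first by rewrite big_nil subrr.
rewrite mulnS addnC iotaD big_cat IH /=.
rewrite !big_cons big_nil (_ : (1 + 2 * p)%N = 2 * p + 1 + false)%N; last by lia.
rewrite (_ : (2 * p + 1 + false).+1 = 2 * p + 1 + true)%N; last by lia.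
by rewrite !tree_coef_pair; field.
Qed.

Lemma child_colors_Cmat i : (0 < i <= 2 * l)%N ->
  child_colors (2 * l) (Cmat (2 * l)) i =
  rcons (iota 1 (2 * (l - uphalf i))) (2 * (l - uphalf i) + 1 + odd i)%N.
Proof.
move=> hi; set d := (l - uphalf i)%N; rewrite /child_colors.
rewrite [X in iota 1 X](_ : _ = 2 * d + (2 + (2 * l - 2 * d - 2)))%N; last by lia.
rewrite iotaD (iotaD (1 + 2 * d) 2) !filter_cat.
rewrite (@eq_in_filter _ _ pred0 (iota _ (_ - _))) ?filter_pred0 ?cats0; last first.
  by move=> j; rewrite mem_iota /Cmat /= /d; lia.
rewrite (@eq_in_filter _ _ predT (iota 1 _)) ?filter_predT -?cats1; last first.
  by move=> j; rewrite mem_iota /Cmat /= /d; lia.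
congr (_ ++ _); rewrite /=.
have -> : Cmat (2 * l) i (1 + 2 * d) = ~~ odd i by rewrite /Cmat /d; lia.
have -> : Cmat (2 * l) i (1 + 2 * d).+1 = odd i by rewrite /Cmat /d; lia.
by case: (odd i) => /=; congr [:: _]; lia.
Qed.

Lemma child_coef_E i n : (0 < i <= 2 * l)%N ->
  child_coef i n = fpow 0 n - denom_coef i n.
Proof.
move=> hi; have le_il : (uphalf i <= l)%N by lia.
rewrite /child_coef child_colors_Cmat // -cats1 big_cat big_seq1 /=.
rewrite sum_tree_coef tree_coef_pair /denom_coef natrB // -natr1 natrB //.
by rewrite (addrAC l%:R); field.
Qed.

Lemma tree_denom_conv i n :
  \sum_(p < n.+1) tree_coef i p * denom_coef i (n - p) = (n == 1%N)%:R.
Proof.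
rewrite /tree_coef /denom_coef; set k := (uphalf i)%:R.
rewrite (eq_bigr (fun p : 'I_n.+1 =>
   (fpow (k - 1) p * fpow (l%:R - k) (n - p)
    + fpow (k - 1) p * fpow (l%:R + 1 - k) (n - p)
    - fpow k p * fpow (l%:R - k) (n - p)
    - fpow k p * fpow (l%:R + 1 - k) (n - p)) / 4));
  last by move=> p _; field.
rewrite -mulr_suml !sumrB !big_split /= !fpow_conv.
have -> : k - 1 + (l%:R - k) = l%:R - 1 by ring.
have -> : k - 1 + (l%:R + 1 - k) = l%:R by ring.
have -> : k + (l%:R - k) = l%:R by ring.
have -> : k + (l%:R + 1 - k) = l%:R + 1 by ring.
by rewrite addrK fpow_pred_sub_succ; field.
Qed.

Lemma tree_coef_rec i n : (0 < i <= 2 * l)%N -> (0 < n)%N ->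
  tree_coef i n.+1 = \sum_(p < n) child_coef i (n - p) * tree_coef i p.+1.
Proof.
move=> hi n_gt0; have := tree_denom_conv i n.+1.
have T0 : tree_coef i 0 = 0 by rewrite /tree_coef !fpow_coef0 subrr mul0r.
have D0 : denom_coef i 0 = 1 by rewrite /denom_coef !fpow_coef0; field.
rewrite big_ord_recl T0 mul0r add0r big_ord_recr /= subnn D0 mulr1.
rewrite (_ : (n.+1 == 1%N) = false); last by case: n n_gt0.
move/eqP; rewrite addrC addr_eq0 => /eqP ->; rewrite -sumrN.
apply: eq_bigr => p _; have lt_pn := ltn_ord p.
rewrite /bump leq0n add1n subSS child_coef_E //.
by rewrite fpow_exp0 (_ : (n - p == 0)%N = false) /=; [ring | lia].
Qed.

Lemma size_cforests_Cmat N i n : (n <= N)%N -> (0 < i <= 2 * l)%N ->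
  (size (cforests (2 * l) (Cmat (2 * l)) N i n))%:R = tree_coef i n.+1.
Proof.
elim/ltn_ind: n N i => -[|n] IH N i le_nN hi.
  rewrite size_cforests0 /tree_coef /fpow /rotheA /binomr !big_ord0 fact0 expr1.
  by field.
case: N le_nN => [|N] le_nN; first by lia.
rewrite size_cforestsS natr_sum tree_coef_rec //; apply: eq_bigr => p _.
have lt_pn := ltn_ord p.
rewrite /child_coef natr_sum mulr_suml big_seq [RHS]big_seq; apply: eq_bigr => j.
rewrite /child_colors mem_filter mem_iota => /andP[_ hj].
by rewrite natrM !IH ?subSn //; lia.
Qed.

Lemma size_ctrees_Cmat n : (0 < n)%N ->
  (size (ctrees (2 * l) (Cmat (2 * l)) n))%:R = - fpow l%:R n.
Proof.
move=> n_gt0; rewrite size_ctrees natr_sum big_seq.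
rewrite (eq_bigr (fun i => tree_coef i n)) => [|i]; last first.
  by rewrite mem_iota => hi; rewrite size_cforests_Cmat ?prednK //; lia.
rewrite -big_seq sum_tree_coef fpow_exp0 (_ : (n == 0)%N = false) ?sub0r //.
by case: n n_gt0.
Qed.

End ColorMatrixSeries.

Theorem theorem38 (l n : nat) (hl : (0 < l)%N) (hn : (0 < n)%N) :
  exists N : nat, is_tA (2 * l) (Cmat (2 * l)) n N /\
    N%:R = (l%:R / n%:R) * 2 ^+ (2 * n).-1 *
           binomr ((l%:R + 1) / 2 * n%:R - l%:R / 2 - 1) n.-1 :> rat.
Proof.
exists (size (ctrees (2 * l) (Cmat (2 * l)) n)); split; first exact: ctrees_tA.
rewrite size_ctrees_Cmat // /fpow; case: n hn => // n _.
rewrite /rotheA (_ : (2 * n.+1).-1 = (2 * n).+1)%N; last by lia.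
have -> : - l%:R / 2 + (l%:R + 1) / 2 * n.+1%:R - 1 =
          (l%:R + 1) / 2 * n.+1%:R - l%:R / 2 - 1 :> rat by ring.
have -> : 4 ^+ n.+1 = 2 ^+ (2 * n).+1 * 2 :> rat.
  by rewrite -exprSr (_ : (2 * n).+2 = 2 * n.+1)%N ?exprM ?expr2 -?natrM //; lia.
by field; rewrite nat1r pnatr_eq0.
Qed.
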